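(* Let $q=2^h$, let $\alpha\in{\rm GF}(q)$ be such that $X^2+X+\alpha$ is irreducible over ${\rm GF}(q)$, and let $G=\{M_{a,b,c,d}: a\in{\rm GF}(q)\setminus\{0\},\ b,c,d\in{\rm GF}(q),\ c^2+cd+\alpha d^2=1\}$, where $$M_{a,b,c,d}=\begin{pmatrix}1&0&0&0&0\\0&ac&\alpha ad&bc&\alpha bd\\0&ad&a(c+d)&bd&b(c+d)\\0&0&0&a^{-1}c&\alpha a^{-1}d\\0&0&0&a^{-1}d&a^{-1}(c+d)\end{pmatrix},$$ acting on the points (column vectors) of ${\rm PG}(4,q)$ by left multiplication. Then, under the action of $G$ on the planes of ${\rm PG}(4,q)$, there are $q^2-q$ distinct plane-orbits of size $q^3-q$, each consisting of planes any two of which intersect in exactly one point. *)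

From HB Require Import structures.
From mathcomp Require Import all_boot all_order all_algebra all_fingroup all_field.
Set Implicit Arguments. Unset Strict Implicit. Unset Printing Implicit Defensive.
Import GRing.Theory Num.Theory.
Local Open Scope ring_scope.

Definition Mabcd (F : fieldType) (alpha a b c d : F) : 'M[F]_5 :=
  let rows : seq (seq F) :=
    [:: [:: 1; 0; 0; 0; 0];
        [:: 0; a * c; alpha * a * d; b * c; alpha * b * d];
        [:: 0; a * d; a * (c + d); b * d; b * (c + d)];
        [:: 0; 0; 0; a^-1 * c; alpha * a^-1 * d];
        [:: 0; 0; 0; a^-1 * d; a^-1 * (c + d)]] in
  \matrix_(i < 5, j < 5) nth 0 (nth [::] rows i) j.

Definition Ggroup (F : finFieldType) (alpha : F) : {set 'M[F]_5} :=
  [set M | [exists a : F, exists b : F, exists c : F, exists d : F,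
     [&& a != 0, c ^+ 2 + c * d + alpha * d ^+ 2 == 1 & M == Mabcd alpha a b c d]]].

(* Subspaces of F^5 are represented by the row space of a 5x5 matrix, in the
   canonical form <<U>>%MS; a column vector v lies in the subspace iff
   v^T <= U. *)
Definition planes (F : finFieldType) : {set 'M[F]_5} :=
  [set U : 'M[F]_5 | (\rank U == 3)%N && (<<U>>%MS == U)].

(* Image of the subspace U under the map v |-> M v on column vectors:
   in row convention, the row space of U *m M^T. *)
Definition act_sub (F : fieldType) (M U : 'M[F]_5) : 'M[F]_5 :=
  <<U *m M^T>>%MS.

Definition plane_orbit (F : finFieldType) (alpha : F) (U : 'M[F]_5)
  : {set 'M[F]_5} :=
  [set act_sub M U | M in Ggroup alpha].

Definition plane_orbits (F : finFieldType) (alpha : F) : {set {set 'M[F]_5}} :=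
  [set plane_orbit alpha U | U in planes F].

From HB Require Import structures.
From mathcomp Require Import all_boot all_order all_algebra all_fingroup all_field.
From mathcomp Require Import ring zify.
Set Implicit Arguments.
Unset Strict Implicit.
Unset Printing Implicit Defensive.
Import GRing.Theory Num.Theory.
Local Open Scope ring_scope.

(* G fixes the first coordinate and, in characteristic 2, preserves the quadratic
   form Q(z) = z1 z4 + z2 z3 on row vectors z (a column plane U is mapped to M U,
   and z is orthogonal to M U iff z M is orthogonal to U).  For s <> 0 let
   P(s,t) be spanned by (s,1,0,0,0), (t,0,1,0,1), (s+t,0,0,1,1).  A vector z
   orthogonal to P(s,t) is determined by z0 and z4, and Q(z) = t(s+t) z0^2 + z4^2;
   as squaring is injective, it is determined by z0 and Q(z).  So if v M and v M'
   are both orthogonal to P(s,t), with M, M' in G, then v M = v M', and the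
   anisotropy of c^2 + c d + alpha d^2 forces v = 0 or M = M'.  Hence two distinct
   images M P, M' P span F^5 and meet in a point, and the orbit of P(s,t) has
   |G| = (q-1) q (q+1) elements.  Finally, if M in G maps P(s2,t2) onto P(s1,t1),
   then (0,0,1,1,1) M must be orthogonal to P(s2,t2) like (0,0,1,1,1) itself;
   this forces M = 1, so the q (q-1) planes P(s,t) with s <> 0 lie in distinct
   orbits. *)

Lemma irredp_noroot (R : idomainType) (p : {poly R}) (x : R) :
  irreducible_poly p -> (2 < size p)%N -> ~~ root p x.
Proof.
move=> [_ irr_p] size_p; apply/negP; rewrite -dvdp_XsubCl => /irr_p.
rewrite size_XsubC => /(_ isT) /eqp_size sizeE.
by rewrite -sizeE size_XsubC in size_p.
Qed.

Lemma irredp_quadratic_noroot (R : idomainType) (a x : R) :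
  irreducible_poly ('X^2 + 'X + a%:P) -> x ^+ 2 + x + a != 0.
Proof.
move=> /(irredp_noroot x); rewrite /root !hornerE; apply.
by rewrite -addrA size_polyDl ?size_polyXn ?size_XaddC.
Qed.

Lemma sqrf_inj_pchar2 (F : fieldType) :
  2 \in [pchar F] -> injective (fun x : F => x ^+ 2).
Proof. by move=> F2 x y; rewrite /= -!(pFrobenius_autE F2) => /fmorph_inj. Qed.

Lemma addr_eq0_pchar2 (R : nzRingType) (x y : R) :
  2 \in [pchar R] -> (x + y == 0) = (x == y).
Proof. by move=> R2; rewrite addr_eq0 (GRing.oppr_pchar2 R2). Qed.

Section Orthogonality.
Variable F : fieldType.

Lemma mulmx_tr_eq0S m1 m2 n (A : 'M[F]_(m1, n)) (B : 'M[F]_(m2, n)) (v : 'rV[F]_n) :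
  (A <= B)%MS -> v *m B^T = 0 -> v *m A^T = 0.
Proof. by case/submxP=> D -> vB0; rewrite trmx_mul mulmxA vB0 mul0mx. Qed.

Lemma mxrank_cap_perp n (A B : 'M[F]_n) :
  (forall v : 'rV_n, v *m A^T = 0 -> v *m B^T = 0 -> v = 0) ->
  \rank (A :&: B)%MS = (\rank A + \rank B - n)%N.
Proof.
move=> perp0; have : row_free (A + B)%MS^T.
  apply: inj_row_free => v vAB0; apply: perp0.
    exact: mulmx_tr_eq0S (addsmxSl A B) vAB0.
  exact: mulmx_tr_eq0S (addsmxSr A B) vAB0.
by rewrite /row_free mxrank_tr -(mxrank_sum_cap A B) => /eqP->; rewrite addKn.
Qed.

End Orthogonality.

Section NormForm.
Variables (F : fieldType) (alpha : F).
Hypothesis F2 : 2 \in [pchar F].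
Hypothesis X2DXDalpha_neq0 : forall x : F, x ^+ 2 + x + alpha != 0.

Definition qnorm (c d : F) := c ^+ 2 + c * d + alpha * d ^+ 2.

Lemma qnormZ k c d : qnorm (k * c) (k * d) = k ^+ 2 * qnorm c d.
Proof. by rewrite /qnorm; ring. Qed.

Lemma qnorm_eq0 c d : qnorm c d = 0 -> c = 0 /\ d = 0.
Proof.
move=> N0; have [d0|d_neq0] := eqVneq d 0.
  have : c ^+ 2 = 0 by rewrite -N0 /qnorm d0; ring.
  by move/eqP; rewrite expf_eq0 /= => /eqP.
have := X2DXDalpha_neq0 (c / d).
suff -> : (c / d) ^+ 2 + c / d + alpha = qnorm c d / d ^+ 2 by rewrite N0 mul0r eqxx.
by rewrite /qnorm; field.
Qed.

(* In the basis (1, w) of GF(q^2) = GF(q)[w], w^2 + w + alpha = 0, the matrix of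
   multiplication by x + y w acts on row vectors as (z1, z2) |-> (x z1 + y z2,
   alpha y z1 + (x + y) z2) and has determinant [qnorm x y]: this lemma says that
   GF(q^2) has no zero divisors. *)
Lemma cmul_eq0 x y z1 z2 :
  x * z1 + y * z2 = 0 -> alpha * y * z1 + (x + y) * z2 = 0 ->
  (x = 0 /\ y = 0) \/ (z1 = 0 /\ z2 = 0).
Proof.
move=> e1 e2; have two0 := pcharf0 F2.
have [/qnorm_eq0|N_neq0] := eqVneq (qnorm x y) 0; [by left | right].
have Nz1 : qnorm x y * z1 =
    (x + y) * (x * z1 + y * z2) + y * (alpha * y * z1 + (x + y) * z2).
  by rewrite /qnorm; ring: two0.
have Nz2 : qnorm x y * z2 =
    alpha * y * (x * z1 + y * z2) + x * (alpha * y * z1 + (x + y) * z2).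
  by rewrite /qnorm; ring: two0.
rewrite e1 e2 !mulr0 addr0 in Nz1 Nz2.
by split; apply: (mulfI N_neq0); rewrite mulr0.
Qed.

Lemma cmulZ_eq0 k c d z1 z2 : k != 0 -> qnorm c d = 1 ->
  k * (c * z1 + d * z2) = 0 -> k * (alpha * d * z1 + (c + d) * z2) = 0 ->
  z1 = 0 /\ z2 = 0.
Proof.
move=> k_neq0 N1 /eqP + /eqP; rewrite !mulf_eq0 (negPf k_neq0) /= => /eqP e1 /eqP e2.
have [[c0 d0] | //] := cmul_eq0 e1 e2.
have : 1 = 0 :> F by rewrite -N1 c0 d0 /qnorm; ring.
by move/eqP; rewrite oner_eq0.
Qed.

End NormForm.

Section Coordinates.
Variable F : fieldType.

Definition vec5 (z0 z1 z2 z3 z4 : F) : 'rV[F]_5 :=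
  \row_(j < 5) nth 0 [:: z0; z1; z2; z3; z4] j.

Lemma vec5_surj (v : 'rV[F]_5) : exists z0 z1 z2 z3 z4, v = vec5 z0 z1 z2 z3 z4.
Proof.
exists (v 0 (inord 0)), (v 0 (inord 1)), (v 0 (inord 2)), (v 0 (inord 3)), (v 0 (inord 4)).
by apply/rowP => -[[|[|[|[|[|j]]]]] lt_j5] //; rewrite mxE /=;
  congr (v 0 _); apply: val_inj; rewrite /= inordK.
Qed.

Lemma vec5_inj z0 z1 z2 z3 z4 z0' z1' z2' z3' z4' :
  vec5 z0 z1 z2 z3 z4 = vec5 z0' z1' z2' z3' z4' ->
  [/\ z0 = z0', z1 = z1', z2 = z2', z3 = z3' & z4 = z4'].
Proof.
move/rowP=> e; split;
  [move: (e (inord 0)) | move: (e (inord 1)) | move: (e (inord 2))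
  | move: (e (inord 3)) | move: (e (inord 4))];
  by rewrite !mxE inordK.
Qed.

Lemma vec5_0 : vec5 0 0 0 0 0 = 0.
Proof. by apply/rowP => -[[|[|[|[|[|j]]]]] lt_j5]; rewrite !mxE. Qed.

Lemma vec5_coord0 z0 z1 z2 z3 z4 : vec5 z0 z1 z2 z3 z4 0 (inord 0) = z0.
Proof. by rewrite mxE inordK. Qed.

Lemma mul_vec5_Mabcd alpha a b c d z0 z1 z2 z3 z4 :
  vec5 z0 z1 z2 z3 z4 *m Mabcd alpha a b c d =
  vec5 z0 (a * (c * z1 + d * z2)) (a * (alpha * d * z1 + (c + d) * z2))
       (b * (c * z1 + d * z2) + a^-1 * (c * z3 + d * z4))
       (b * (alpha * d * z1 + (c + d) * z2) + a^-1 * (alpha * d * z3 + (c + d) * z4)).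
Proof.
by apply/rowP => -[[|[|[|[|[|j]]]]] lt_j5];
  rewrite !mxE !big_ord_recl big_ord0 !mxE //=; ring.
Qed.

Lemma Mabcd1 (alpha : F) : Mabcd alpha 1 0 1 0 = 1%:M.
Proof.
apply/matrixP => -[[|[|[|[|[|i]]]]] lt_i5] -[[|[|[|[|[|j]]]]] lt_j5];
  by rewrite !mxE //= ?invr1; ring.
Qed.

Definition plane_mx (s t : F) : 'M[F]_(3, 5) :=
  \matrix_(i < 3, j < 5)
    nth 0 (nth [::] [:: [:: s; 1; 0; 0; 0];
                        [:: t; 0; 1; 0; 1];
                        [:: s + t; 0; 0; 1; 1]] i) j.

Definition plane s t : 'M[F]_5 := <<plane_mx s t>>%MS.

Lemma row_free_plane_mx s t : row_free (plane_mx s t).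
Proof.
apply: inj_row_free => v /rowP v0; apply/rowP => -[[|[|[|i]]] lt_i3] //;
  rewrite [RHS]mxE; [move: (v0 (inord 1)) | move: (v0 (inord 2)) | move: (v0 (inord 3))];
  rewrite !mxE !big_ord_recl big_ord0 !mxE inordK //= => <-;
  by rewrite !(mulr0, mulr1, addr0, add0r); congr (v 0 _); apply: val_inj.
Qed.

Definition qform (v : 'rV[F]_5) :=
  v 0 (inord 1) * v 0 (inord 4) + v 0 (inord 2) * v 0 (inord 3).

Lemma qform_vec5 z0 z1 z2 z3 z4 : qform (vec5 z0 z1 z2 z3 z4) = z1 * z4 + z2 * z3.
Proof. by rewrite /qform !mxE !inordK. Qed.

Lemma act_plane_eqmx M s t : (act_sub M (plane s t) :=: plane_mx s t *m M^T)%MS.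
Proof. by apply: eqmx_trans (genmxE _) _; apply: eqmxMr; apply: genmxE. Qed.

Lemma act_plane_perp M s t (v : 'rV[F]_5) :
  v *m (act_sub M (plane s t))^T = 0 -> (v *m M) *m (plane_mx s t)^T = 0.
Proof.
have sub : (plane_mx s t *m M^T <= act_sub M (plane s t))%MS by rewrite act_plane_eqmx.
by move/(mulmx_tr_eq0S sub); rewrite trmx_mul trmxK mulmxA.
Qed.

Hypothesis F2 : 2 \in [pchar F].

Lemma vec5_perp_plane s t z0 z1 z2 z3 z4 :
  vec5 z0 z1 z2 z3 z4 *m (plane_mx s t)^T = 0 <->
  [/\ z1 = s * z0, z2 = t * z0 + z4 & z3 = (s + t) * z0 + z4].
Proof.
have -> : vec5 z0 z1 z2 z3 z4 *m (plane_mx s t)^T =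
    \row_(i < 3) nth 0 [:: z1 + s * z0; z2 + (t * z0 + z4);
                           z3 + ((s + t) * z0 + z4)] i.
  by apply/rowP => -[[|[|[|i]]] lt_i3]; rewrite !mxE !big_ord_recl big_ord0 !mxE //=; ring.
split=> [/rowP e | [-> -> ->]]; last first.
  by apply/rowP => -[[|[|[|i]]] lt_i3]; rewrite !mxE //= addrr_pchar2.
split; apply/eqP; rewrite -addr_eq0_pchar2 //;
  [move: (e (inord 0)) | move: (e (inord 1)) | move: (e (inord 2))];
  by rewrite !mxE inordK // => /= ->.
Qed.

End Coordinates.

Section MabcdAction.
Variables (F : fieldType) (alpha : F).
Hypothesis F2 : 2 \in [pchar F].
Hypothesis X2DXDalpha_neq0 : forall x : F, x ^+ 2 + x + alpha != 0.
Local Notation N := (qnorm alpha).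
Local Notation M := (Mabcd alpha).

Lemma Mabcd_coord0 (v : 'rV[F]_5) a b c d :
  (v *m M a b c d) 0 (inord 0) = v 0 (inord 0).
Proof.
by have [z0 [z1 [z2 [z3 [z4 ->]]]]] := vec5_surj v; rewrite mul_vec5_Mabcd !vec5_coord0.
Qed.

Lemma qform_Mabcd (v : 'rV[F]_5) a b c d : a != 0 -> N c d = 1 ->
  qform (v *m M a b c d) = qform v.
Proof.
move=> a_neq0 N1; have [z0 [z1 [z2 [z3 [z4 ->]]]]] := vec5_surj v.
rewrite mul_vec5_Mabcd !qform_vec5 -[RHS]mul1r -N1 /qnorm.
by field: (pcharf0 F2).
Qed.

Lemma row_free_Mabcd a b c d : a != 0 -> N c d = 1 -> row_free (M a b c d).
Proof.
move=> a_neq0 N1; apply: inj_row_free => v.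
have [z0 [z1 [z2 [z3 [z4 ->]]]]] := vec5_surj v.
rewrite mul_vec5_Mabcd -vec5_0 => /vec5_inj[-> e1 e2 e3 e4].
have [z1_0 z2_0] := cmulZ_eq0 F2 X2DXDalpha_neq0 a_neq0 N1 e1 e2.
rewrite z1_0 z2_0 !(mulr0, add0r) in e3 e4.
have [-> ->] := cmulZ_eq0 F2 X2DXDalpha_neq0 (invr_neq0 a_neq0) N1 e3 e4.
by rewrite z1_0 z2_0.
Qed.

Lemma mulmx_Mabcd_eq z0 z1 z2 z3 z4 a b c d a' b' c' d' :
  a != 0 -> N c d = 1 -> N c' d' = 1 ->
  vec5 z0 z1 z2 z3 z4 *m M a b c d = vec5 z0 z1 z2 z3 z4 *m M a' b' c' d' ->
  (z1 = 0 /\ z2 = 0) \/ (a, b, c, d) = (a', b', c', d').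
Proof.
move=> a_neq0 N1 N1'; rewrite !mul_vec5_Mabcd => /vec5_inj[_ e1 e2 e3 e4].
have E1 : (a * c - a' * c') * z1 + (a * d - a' * d') * z2 =
    a * (c * z1 + d * z2) - a' * (c' * z1 + d' * z2) by ring.
have E2 : alpha * (a * d - a' * d') * z1 + ((a * c - a' * c') + (a * d - a' * d')) * z2 =
    a * (alpha * d * z1 + (c + d) * z2) - a' * (alpha * d' * z1 + (c' + d') * z2) by ring.
rewrite e1 subrr in E1; rewrite e2 subrr in E2.
have [[/eqP + /eqP] | z12_0] := cmul_eq0 F2 X2DXDalpha_neq0 E1 E2; last by left.
rewrite !subr_eq0 => /eqP ac_eq /eqP ad_eq.
have a_eq : a = a'.
  apply: (sqrf_inj_pchar2 F2) => /=.
  by rewrite -[a ^+ 2]mulr1 -[a' ^+ 2]mulr1 -{1}N1 -N1' -!qnormZ ac_eq ad_eq.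
subst a'; have c_eq := mulfI a_neq0 ac_eq; have d_eq := mulfI a_neq0 ad_eq.
subst c' d'.
have [-> | b_neq] := eqVneq b b'; [by right | left].
apply: (cmulZ_eq0 F2 X2DXDalpha_neq0 (k := b - b') _ N1); first by rewrite subr_eq0.
  by rewrite mulrBl (addIr _ e3) subrr.
by rewrite mulrBl (addIr _ e4) subrr.
Qed.

Lemma perp_plane_eq s t (w w' : 'rV[F]_5) :
  w *m (plane_mx s t)^T = 0 -> w' *m (plane_mx s t)^T = 0 ->
  w 0 (inord 0) = w' 0 (inord 0) -> qform w = qform w' -> w = w'.
Proof.
have [w0 [w1 [w2 [w3 [w4 ->]]]]] := vec5_surj w.
have [w0' [w1' [w2' [w3' [w4' ->]]]]] := vec5_surj w'.
move=> /(vec5_perp_plane F2) [-> -> ->] /(vec5_perp_plane F2) [-> -> ->].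
rewrite !vec5_coord0 !qform_vec5 => <-.
have qformE x y : s * x * y + (t * x + y) * ((s + t) * x + y) = t * (s + t) * x ^+ 2 + y ^+ 2.
  by ring: (pcharf0 F2).
by rewrite !qformE => /addrI /(sqrf_inj_pchar2 F2) ->.
Qed.

Lemma perp_plane_Mabcd s t (v : 'rV[F]_5) a b c d a' b' c' d' :
  s != 0 -> a != 0 -> N c d = 1 -> a' != 0 -> N c' d' = 1 ->
  (v *m M a b c d) *m (plane_mx s t)^T = 0 ->
  (v *m M a' b' c' d') *m (plane_mx s t)^T = 0 ->
  v = 0 \/ (a, b, c, d) = (a', b', c', d').
Proof.
move=> s_neq0 a_neq0 N1 a'_neq0 N1' perpM perpM'.
have vM_eq : v *m M a b c d = v *m M a' b' c' d'.
  apply: (perp_plane_eq perpM perpM'); first by rewrite !Mabcd_coord0.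
  by rewrite !qform_Mabcd.
move: perpM vM_eq; have [z0 [z1 [z2 [z3 [z4 ->]]]]] := vec5_surj v.
move=> + /(mulmx_Mabcd_eq a_neq0 N1 N1') [[z1_0 z2_0] | ]; last by right.
rewrite mul_vec5_Mabcd z1_0 z2_0 => /(vec5_perp_plane F2) [].
rewrite !(mulr0, addr0, add0r) => /esym/eqP + e2 e3.
rewrite mulf_eq0 (negPf s_neq0) /= => /eqP z0_0.
rewrite z0_0 !(mulr0, add0r) in e2 e3; rewrite -e2 in e3.
have [z3_0 z4_0] := cmulZ_eq0 F2 X2DXDalpha_neq0 (invr_neq0 a_neq0) N1 e3 (esym e2).
by left; rewrite z0_0 z3_0 z4_0 vec5_0.
Qed.

Lemma rank_act_plane s t a b c d : a != 0 -> N c d = 1 ->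
  \rank (act_sub (M a b c d) (plane s t)) = 3%N.
Proof.
move=> a_neq0 N1; rewrite act_plane_eqmx mxrankMfree; first exact/eqP/row_free_plane_mx.
by rewrite row_free_unit unitmx_tr -row_free_unit row_free_Mabcd.
Qed.

Lemma act_plane_cap s t a b c d a' b' c' d' :
  s != 0 -> a != 0 -> N c d = 1 -> a' != 0 -> N c' d' = 1 ->
  (a, b, c, d) != (a', b', c', d') ->
  \rank (act_sub (M a b c d) (plane s t) :&: act_sub (M a' b' c' d') (plane s t))%MS = 1%N.
Proof.
move=> s_neq0 a_neq0 N1 a'_neq0 N1' neq.
rewrite mxrank_cap_perp ?rank_act_plane // => v /act_plane_perp perpM /act_plane_perp perpM'.
have [//|eq] := perp_plane_Mabcd s_neq0 a_neq0 N1 a'_neq0 N1' perpM perpM'.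
by rewrite eq eqxx in neq.
Qed.

Lemma plane_act_eq s1 t1 s2 t2 a b c d : a != 0 -> N c d = 1 ->
  plane s1 t1 = act_sub (M a b c d) (plane s2 t2) -> (s1, t1) = (s2, t2).
Proof.
move=> a_neq0 N1 planes_eq.
have perpM (w : 'rV[F]_5) : w *m (plane_mx s1 t1)^T = 0 ->
    (w *m M a b c d) *m (plane_mx s2 t2)^T = 0.
  have sub : (plane s1 t1 <= plane_mx s1 t1)%MS by rewrite genmxE.
  by move=> /(mulmx_tr_eq0S sub); rewrite planes_eq => /act_plane_perp.
have /perpM : vec5 0 0 1 1 1 *m (plane_mx s1 t1)^T = 0.
  by apply/(vec5_perp_plane F2); split; ring.
rewrite mul_vec5_Mabcd => /(vec5_perp_plane F2) [].
rewrite !(mulr0, mulr1, add0r, addr0) => /eqP + e2 e3.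
rewrite mulf_eq0 (negPf a_neq0) => /eqP d0; subst d.
rewrite !(mulr0, addr0, add0r) in e2 e3.
have c1 : c = 1 by apply: (sqrf_inj_pchar2 F2); rewrite /= expr1n -N1 /qnorm; ring.
subst c; rewrite !mulr1 in e2 e3.
have b0 : b = 0 by apply: (@addIr _ a^-1); rewrite add0r -e3.
subst b; rewrite add0r in e2.
have a1 : a = 1 by apply: (sqrf_inj_pchar2 F2); rewrite /= expr1n expr2 {2}e2 mulfV.
subst a.
have /perpM : vec5 1 s1 t1 (s1 + t1) 0 *m (plane_mx s1 t1)^T = 0.
  by apply/(vec5_perp_plane F2); split; ring.
by rewrite Mabcd1 mulmx1 => /(vec5_perp_plane F2) []; rewrite !(mulr1, addr0) => -> ->.
Qed.

End MabcdAction.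

Section PlaneOrbits.
Variables (F : finFieldType) (alpha : F).
Hypothesis F2 : 2 \in [pchar F].
Hypothesis X2DXDalpha_neq0 : forall x : F, x ^+ 2 + x + alpha != 0.
Local Notation N := (qnorm alpha).
Local Notation q := #|F|.

Lemma plane_in_planes s t : plane s t \in planes F.
Proof.
by rewrite inE /plane mxrank_gen genmx_id (eqP (row_free_plane_mx s t)) !eqxx.
Qed.

Lemma card_fst_neq0 : #|[set ab : F * F | ab.1 != 0]| = (q.-1 * q)%N.
Proof.
have -> : [set ab : F * F | ab.1 != 0] = setX [set~ 0] setT.
  by apply/setP => -[a b]; rewrite !inE andbT.
by rewrite cardsX cardsC1 cardsT.
Qed.

Definition conic_pt (s : F) : F * F :=
  let d := (s ^+ 2 + s + alpha)^-1 in (1 + s * d, d).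

Lemma conic_pt2_neq0 s : (conic_pt s).2 != 0.
Proof. by rewrite invr_eq0. Qed.

Lemma qnorm_conic_pt s : N (conic_pt s).1 (conic_pt s).2 = 1.
Proof.
rewrite /= /qnorm; set d := _^-1.
have dE : d * (s ^+ 2 + s + alpha) = 1 by rewrite mulVf.
have -> : (1 + s * d) ^+ 2 + (1 + s * d) * d + alpha * d ^+ 2 =
          1 + d + d * (d * (s ^+ 2 + s + alpha)) by ring: (pcharf0 F2).
by rewrite dE mulr1 -addrA addrr_pchar2 // addr0.
Qed.

Lemma conic_ptK c d : N c d = 1 -> d != 0 -> conic_pt ((c + 1) / d) = (c, d).
Proof.
move=> N1 d_neq0; have two0 := pcharf0 F2; rewrite /conic_pt.
have -> : ((c + 1) / d) ^+ 2 + (c + 1) / d + alpha = d^-1.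
  have -> : ((c + 1) / d) ^+ 2 + (c + 1) / d + alpha = (N c d + 1 + d) / d ^+ 2.
    by rewrite /qnorm; field: two0.
  by rewrite N1; field: two0.
by rewrite invrK; congr pair; field: two0.
Qed.

Lemma conic_pt_inj : injective conic_pt.
Proof.
move=> s1 s2 [e1 e2]; rewrite e2 in e1.
by apply: (mulIf (conic_pt2_neq0 s2)); apply: addrI e1.
Qed.

Lemma card_qnorm_eq1 : #|[set cd : F * F | N cd.1 cd.2 == 1]| = q.+1.
Proof.
have -> : [set cd : F * F | N cd.1 cd.2 == 1] = (1, 0) |: (conic_pt @: setT).
  apply/setP => -[c d]; rewrite !inE /=; apply/idP/idP.
    move/eqP=> N1; have [d0 | d_neq0] := eqVneq d 0.
      have c1 : c = 1.
        by apply: (sqrf_inj_pchar2 F2); rewrite /= expr1n -N1 d0 /qnorm; ring.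
      by rewrite c1 d0 eqxx.
    by apply/orP; right; apply/imsetP; exists ((c + 1) / d); rewrite ?conic_ptK.
  case/orP => [/eqP [-> ->] | /imsetP [s _ [-> ->]]]; last exact/eqP/qnorm_conic_pt.
  by apply/eqP; rewrite /qnorm; ring.
rewrite cardsU1 card_imset ?cardsT; last exact: conic_pt_inj.
suff -> : (1, 0) \notin conic_pt @: setT by [].
by apply/imsetP => -[s _ [_ d0]]; move: (conic_pt2_neq0 s); rewrite /= -d0 eqxx.
Qed.

Definition params : {set (F * F) * (F * F)} :=
  setX [set ab : F * F | ab.1 != 0] [set cd : F * F | N cd.1 cd.2 == 1].

Definition Mparam (p : (F * F) * (F * F)) := Mabcd alpha p.1.1 p.1.2 p.2.1 p.2.2.

Lemma card_params : #|params| = (q.-1 * q * q.+1)%N.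
Proof. by rewrite cardsX card_fst_neq0 card_qnorm_eq1. Qed.

Lemma Ggroup_params : Ggroup alpha = Mparam @: params.
Proof.
apply/setP => A; rewrite inE; apply/idP/imsetP.
  case/existsP => a /existsP [b] /existsP [c] /existsP [d] /and3P [a_neq0 N1 /eqP ->].
  by exists ((a, b), (c, d)); rewrite // !inE /= a_neq0.
case=> [[[a b] [c d]]]; rewrite !inE /= => /andP [a_neq0 N1] ->.
apply/existsP; exists a; apply/existsP; exists b; apply/existsP; exists c.
by apply/existsP; exists d; rewrite a_neq0 N1 eqxx.
Qed.

Lemma plane_orbit_params U :
  plane_orbit alpha U = [set act_sub (Mparam p) U | p in params].
Proof. by rewrite /plane_orbit Ggroup_params -imset_comp. Qed.

Lemma rank_act_plane_param s t p : p \in params ->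
  \rank (act_sub (Mparam p) (plane s t)) = 3%N.
Proof.
case: p => [[a b] [c d]]; rewrite !inE /= => /andP [a_neq0 /eqP N1].
exact: rank_act_plane.
Qed.

Lemma act_plane_param_cap s t p p' : s != 0 -> p \in params -> p' \in params ->
  p != p' ->
  \rank (act_sub (Mparam p) (plane s t) :&: act_sub (Mparam p') (plane s t))%MS = 1%N.
Proof.
case: p p' => [[a b] [c d]] [[a' b'] [c' d']] s_neq0.
rewrite !inE /= => /andP [a_neq0 /eqP N1] /andP [a'_neq0 /eqP N1'] neq.
apply: act_plane_cap => //.
by apply: contra neq => /eqP [-> -> -> ->].
Qed.

Lemma card_plane_orbit s t : s != 0 ->
  #|plane_orbit alpha (plane s t)| = (q.-1 * q * q.+1)%N.
Proof.
move=> s_neq0; rewrite plane_orbit_params card_in_imset ?card_params //.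
move=> p p' pP p'P eq_act; apply/eqP; apply: contraT => neq.
have := act_plane_param_cap t s_neq0 pP p'P neq.
by rewrite -eq_act (capmx_idPl (submx_refl _)) rank_act_plane_param.
Qed.

Lemma plane_orbit_cap s t U V : s != 0 ->
  U \in plane_orbit alpha (plane s t) -> V \in plane_orbit alpha (plane s t) ->
  U != V -> \rank (U :&: V)%MS = 1%N.
Proof.
move=> s_neq0; rewrite plane_orbit_params => /imsetP [p pP ->] /imsetP [p' p'P ->] neq.
by apply: act_plane_param_cap => //; apply: contra neq => /eqP ->.
Qed.

Lemma plane_orbit_inj : injective (fun st : F * F => plane_orbit alpha (plane st.1 st.2)).
Proof.
move=> [s1 t1] [s2 t2] /= orbits_eq.
have : plane s1 t1 \in plane_orbit alpha (plane s2 t2).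
  rewrite -orbits_eq; apply/imsetP; exists (Mabcd alpha 1 0 1 0).
    rewrite Ggroup_params; apply/imsetP; exists ((1, 0), (1, 0)) => //.
    by rewrite !inE /= oner_neq0 /qnorm; apply/eqP; ring.
  by rewrite Mabcd1 /act_sub trmx1 mulmx1 genmx_id.
rewrite plane_orbit_params => /imsetP [[[a b] [c d]]].
rewrite !inE /= => /andP [a_neq0 /eqP N1].
exact: plane_act_eq.
Qed.

End PlaneOrbits.

Theorem proposition3p5 (h : nat) (F : finFieldType) (hF : #|F| = (2 ^ h)%N)
  (alpha : F) (halpha : irreducible_poly ('X^2 + 'X + alpha%:P)) :
  exists S : {set {set 'M[F]_5}},
    [/\ #|S| = ((2 ^ h) ^ 2 - 2 ^ h)%N,
        S \subset plane_orbits alpha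
      & forall O, O \in S ->
          #|O| = ((2 ^ h) ^ 3 - 2 ^ h)%N /\
          (forall U V, U \in O -> V \in O -> U != V ->
             \rank (U :&: V)%MS = 1%N)].
Proof.
have F2 : 2 \in [pchar F] := card_finPcharP hF isT.
have noroot x : x ^+ 2 + x + alpha != 0 := irredp_quadratic_noroot x halpha.
have sq_subn q : (q.-1 * q = q ^ 2 - q)%N by case: q => // q; rewrite succnK; nia.
have cube_subn q : (q.-1 * q * q.+1 = q ^ 3 - q)%N by case: q => // q; rewrite succnK; nia.
exists [set plane_orbit alpha (plane st.1 st.2) | st in [set st : F * F | st.1 != 0]].
rewrite -hF; split.
- rewrite card_imset ?card_fst_neq0 ?sq_subn //.
  exact: plane_orbit_inj F2.
- apply/subsetP => _ /imsetP [st _ ->]; apply/imsetP.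
  by exists (plane st.1 st.2); rewrite ?plane_in_planes.
- move=> O /imsetP [[s t]]; rewrite inE /= => s_neq0 ->.
  split; first by rewrite (card_plane_orbit F2 noroot t s_neq0) cube_subn.
  by move=> U V UO VO; exact (plane_orbit_cap F2 noroot s_neq0 UO VO).
Qed.
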